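(* Let $F$ be a once-punctured torus equipped with a point of the decorated super Teichmüller space $S\tilde T(F)$, with super semi-perimeter $h$. Let $\Omega$ be the infinite trivalent tree whose vertices are the ideal triangulations of $F$ and whose edges join triangulations related by a flip; each edge corresponds to the pair of arcs $\{a,b\}$ common to its two endpoint triangulations. For an oriented edge $\vec e$ with common arcs $a,b$ whose head is the triangulation $\{a,b,c\}$, set \[ \psi(\vec e)=\frac1h\left(\frac{c}{ab}+\frac{W_a}{2a}+\frac{W_b}{2b}\right). \] Then for any finite subtree $T$ of $\Omega$, \[ \sum_{\vec e\in\mathcal C(T)}\psi(\vec e)=1, \] where $\mathcal C(T)$ is the set of oriented edges of $\Omega$ whose head lies in $T$ and whose tail lies outside $T$.
   Context: Letters $a,b,c$ denote both ideal arcs and their super $\lambda$-lengths. $S\tilde T(F)$ is the decorated $\mathrm{OSp}(1|2)$ super Teichmüller space (Penner–Zeitlin), with values in a real Grassmann algebra: a point assigns, for each ideal triangulation of $F$ (three disjoint non-isotopic ideal arcs cutting $F$ into two ideal triangles), an even $\lambda$-length with positive body to each arc (depending only on the arc), an odd $\mu$-invariant to each triangle, and a spin structure orienting each arc. For an arc $e$, $W_e=\theta_1\theta_2$ with $\theta_1,\theta_2$ the $\mu$-invariants of the triangles adjacent to $e$ counter-clockwise and clockwise of $e$ relative to its spin orientation (independent of the triangulation). Flipping $c$ in $\{a,b,c\}$ gives $d$ with $cd=a^2+b^2+abW_c$. The super semi-perimeter is $h=\frac{a}{bc}+\frac{b}{ac}+\frac{c}{ab}+\frac{W_a}{a}+\frac{W_b}{b}+\frac{W_c}{c}$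 for any triangulation $\{a,b,c\}$, independent of the triangulation. *)

From HB Require Import structures.
From mathcomp Require Import all_boot all_order all_algebra.
From mathcomp Require Import finmap.
Set Implicit Arguments. Unset Strict Implicit. Unset Printing Implicit Defensive.
Import Order.TTheory GRing.Theory Num.Theory.
Local Open Scope fset_scope.
Local Open Scope ring_scope.

(* Ideal arcs of the once-punctured torus F = (R^2 \ Z^2)/Z^2 are indexed by
   their slopes: primitive integer vectors (p,q) up to sign, normalised by
   q > 0, or (p,q) = (1,0).                                                  *)
Definition is_arc (v : int * int) : bool :=
  (gcdz v.1 v.2 == 1%N) && ((0 < v.2) || ((v.2 == 0) && (v.1 == 1))).

Definition iarc := {v : int * int | is_arc v}.

(* Geometric intersection number of two arcs is |det|; two distinct arcs are
   disjoint (non-isotopic, non-crossing) iff |det| = 1. *)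
Definition arc_det (u v : iarc) : int :=
  (val u).1 * (val v).2 - (val u).2 * (val v).1.

Definition disjoint_arcs (u v : iarc) : bool :=
  (arc_det u v == 1) || (arc_det u v == -1).

Definition tri := {fset iarc}.

Definition is_tri (t : tri) : bool :=
  (#|` t| == 3)%N &&
  [forall x : t, forall y : t, (val x != val y) ==> disjoint_arcs (val x) (val y)].

(* Edges of Omega: two triangulations are related by a flip iff they share
   exactly two arcs. *)
Definition flip_adj (t t' : tri) : bool :=
  [&& is_tri t, is_tri t' & #|` (t `&` t')| == 2]%N.

Definition finite_subtree (T : {fset tri}) : bool :=
  (T != fset0) && [forall u : T, is_tri (val u)] &&
  [forall u : T, forall v : T,
     connect (fun x y : T => flip_adj (val x) (val y)) u v].

(* Oriented edges are pairs (tail, head). The boundary C(T): head in T,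
   tail outside T. *)
Definition in_boundary (T : {fset tri}) (e : tri * tri) : bool :=
  [&& flip_adj e.1 e.2, e.2 \in T & e.1 \notin T].

(* A point of the decorated super Teichmueller space is recorded through the
   data the statement uses, in the even part E of the real Grassmann algebra:
   lam e (super lambda-length of iarc e), W e (= theta1 theta2).            *)

Definition semi_perimeter (E : comUnitRingType) (lam W : iarc -> E)
    (a b c : iarc) : E :=
  lam a / (lam b * lam c) + lam b / (lam a * lam c) + lam c / (lam a * lam b)
  + W a / lam a + W b / lam b + W c / lam c.

(* psi of the oriented edge e = (tail, head): with {a,b} = tail `&` head
   (the common arcs) and {c} = head `\` tail,
     psi e = h^-1 * (c/(ab) + W_a/(2a) + W_b/(2b)).                          *)
Definition psi (E : comUnitRingType) (lam W : iarc -> E) (h : E)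
    (e : tri * tri) : E :=
  h^-1 * ( (\prod_(x <- e.2 `\` e.1) lam x) / (\prod_(x <- e.1 `&` e.2) lam x)
           + \sum_(x <- e.1 `&` e.2) W x / (2 * lam x) ).

(* Weigh an arc of slope (p, q) by Q(p, q) = p^2 + pq + q^2 and a triangulation by
   the total weight of its arcs.  If {a, b, c} is a triangulation then c = +-a +- b,
   and the flip replaces c by the other combination; so a flip always changes the
   weight, and the changes caused by the flips at c and at b add up to 4 Q(a) > 0.
   Hence a triangulation has at most one lighter neighbour, and a finite subtree T
   has a single local minimum.  A heaviest M in T then has exactly one neighbour p
   in T, and T \ M still has a single local minimum.  Adding M back to T \ M
   replaces the boundary edge M -> p by the two other edges into M, which preserves
   the sum: the three values of psi on the edges into a triangulation add up to 1,
   and psi(e) + psi(-e) = 1, by the formula for h and the Ptolemy relation. *)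

From HB Require Import structures.
From mathcomp Require Import all_boot all_order all_algebra.
From mathcomp Require Import finmap zify.
From mathcomp.algebra_tactics Require Import ring.
Import Order.TTheory GRing.Theory Num.Theory.
Local Open Scope fset_scope.
Local Open Scope ring_scope.

Set Implicit Arguments. Unset Strict Implicit.

Definition pm1 (x : int) := x = 1 \/ x = -1.

Lemma pm1N x : pm1 x -> pm1 (- x).
Proof. by case=> ->; rewrite /pm1; lia. Qed.

Lemma pm1M x y : pm1 x -> pm1 y -> pm1 (x * y).
Proof. by case=> ->; case=> ->; rewrite /pm1; lia. Qed.

Lemma pm1_sqr x : pm1 x -> x * x = 1.
Proof. by case=> ->. Qed.

Lemma pm1_neqN x : pm1 x -> x != - x.
Proof. by case=> ->. Qed.

Lemma pm1_eqN x y : pm1 x -> pm1 y -> x != y -> y = - x.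
Proof. by case=> ->; case=> ->. Qed.

Definition vdet (u v : int * int) : int := u.1 * v.2 - u.2 * v.1.

Definition lin_comb (al be : int) (u v : int * int) : int * int :=
  (al * u.1 + be * v.1, al * u.2 + be * v.2).

Lemma vdetC u v : vdet v u = - vdet u v.
Proof. rewrite /vdet; ring. Qed.

Lemma vdetxx u : vdet u u = 0.
Proof. by rewrite /vdet mulrC subrr. Qed.

Lemma vdet_lin_combl al be u v w :
  vdet (lin_comb al be u v) w = al * vdet u w + be * vdet v w.
Proof. rewrite /vdet /lin_comb /=; ring. Qed.

(* Without the cross term [qpolar] could vanish on a pair of disjoint arcs, and a
   flip could preserve the height defined below. *)
Definition qform (v : int * int) : int := v.1 * v.1 + v.1 * v.2 + v.2 * v.2.

Definition qpolar (u v : int * int) : int :=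
  2 * u.1 * v.1 + u.1 * v.2 + u.2 * v.1 + 2 * u.2 * v.2.

Lemma qform_lin_comb al be u v : pm1 al -> pm1 be ->
  qform (lin_comb al be u v) = qform u + qform v + al * be * qpolar u v.
Proof. by rewrite /qform /qpolar /lin_comb /=; case=> ->; case=> ->; ring. Qed.

Lemma qpolar_neq0 u v : pm1 (vdet u v) -> qpolar u v != 0.
Proof.
have -> : qpolar u v = 2 * (u.1 * v.1 + u.2 * v.2 + u.2 * v.1) + vdet u v.
  by rewrite /qpolar /vdet; ring.
by case=> ->; lia.
Qed.

Lemma arc_detE (u v : iarc) : arc_det u v = vdet (val u) (val v).
Proof. by []. Qed.

Lemma disjoint_arcsP (u v : iarc) : reflect (pm1 (arc_det u v)) (disjoint_arcs u v).
Proof.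
apply: (iffP orP) => [[]/eqP ->|[] ->]; rewrite ?eqxx ?orbT; by [left|right|left].
Qed.

Lemma disjoint_arcsC (u v : iarc) : disjoint_arcs u v = disjoint_arcs v u.
Proof. by rewrite /disjoint_arcs !arc_detE vdetC !eqr_oppLR orbC. Qed.

Lemma disjoint_arcs_neq (u v : iarc) : disjoint_arcs u v -> u != v.
Proof.
by move=> /disjoint_arcsP; apply: contraPneq => ->; rewrite arc_detE /vdet mulrC subrr; case.
Qed.

Lemma qform_gt0 (a : iarc) : 0 < qform (val a).
Proof.
case: a => [[p q] /= /andP[_]]; rewrite /qform /=.
by case/orP => [q_gt0|/andP[/eqP -> /eqP ->]] //; nia.
Qed.

(* Arcs are normalised representatives of slopes, so [v] and [-v] are never both arcs. *)
Lemma arc_neq_opp (x y : iarc) : val y <> (- (val x).1, - (val x).2).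
Proof.
case: x => [[p q] /= /andP[_ Hx]]; case: y => [[p' q'] /= /andP[_ Hy]] [e1 e2].
move: Hx Hy; rewrite /= e1 e2 => /orP[Hx|/andP[/eqP Hp /eqP Hq]].
  by case/orP => [|/andP[/eqP Hp' /eqP Hq']]; lia.
by case/orP => [|/andP[/eqP Hp' /eqP Hq']]; lia.
Qed.

Lemma arc_of_unimodular (v : int * int) (a : iarc) : pm1 (vdet v (val a)) ->
  exists x : iarc, val x = v \/ val x = (- v.1, - v.2).
Proof.
case: v => p q /= hd.
have cop : gcdz p q = 1.
  apply/eqP/coprimezP; case: hd => hd.
  - by exists ((val a).2, - (val a).1); rewrite /= -hd /vdet /=; ring.
  - by exists (- (val a).2, (val a).1); rewrite /= -[RHS]opprK -hd /vdet /=; ring.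
have [q_gt0|q_lt0|q0] := ltrgtP 0 q.
- have H : is_arc (p, q) by rewrite /is_arc /= cop eqxx q_gt0.
  by exists (exist _ (p, q) H); left.
- have H : is_arc (- p, - q) by rewrite /is_arc /= gcdNz gcdzN cop eqxx oppr_gt0 q_lt0.
  by exists (exist _ (- p, - q) H); right.
- have H : is_arc (1, 0) by [].
  exists (exist _ (1, 0) H); rewrite /= -q0 oppr0.
  have [->|->] : p = 1 \/ p = -1 by move: cop; rewrite -q0 gcdz0; lia.
  + by left.
  + by right.
Qed.

Section ArcsAroundEdge.
Variables a b : iarc.
Hypothesis dab : disjoint_arcs a b.

Let d := arc_det a b.
Let dd : d * d = 1. Proof. exact/pm1_sqr/disjoint_arcsP. Qed.

Lemma lin_comb_of_disjoint (x : iarc) : disjoint_arcs x a -> disjoint_arcs x b ->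
  exists al be, [/\ pm1 al, pm1 be & val x = lin_comb al be (val a) (val b)].
Proof.
move=> /disjoint_arcsP xa /disjoint_arcsP xb.
have /disjoint_arcsP ab := dab.
exists (arc_det x b * d), (- arc_det x a * d); split; [exact: pm1M|exact/pm1M/ab/pm1N|].
(* Cramer's rule, using [d * d = 1]. *)
move: dd; rewrite /d !arc_detE /vdet /lin_comb.
case: (val x) => x1 x2; case: (val a) => a1 a2; case: (val b) => b1 b2 /= DD.
by congr pair; rewrite -[LHS]mulr1 -DD; ring.
Qed.

Lemma disjoint_of_lin_comb (x : iarc) al be : pm1 al -> pm1 be ->
  val x = lin_comb al be (val a) (val b) -> disjoint_arcs x a /\ disjoint_arcs x b.
Proof.
have /disjoint_arcsP ab := dab.
move=> pal pbe ex; split; apply/disjoint_arcsP; rewrite arc_detE ex vdet_lin_combl vdetxx.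
- by rewrite mulr0 add0r vdetC mulrN; exact/pm1N/pm1M.
- by rewrite mulr0 addr0; exact: pm1M.
Qed.

(* For [x] disjoint from [a] and [b], [val x = al a + be b] with signs [al], [be];
   [side x] is the sign [al * be], which tells the two such arcs apart. *)
Definition side (x : iarc) : int := - (arc_det x a * arc_det x b).

Lemma side_lin_comb (x : iarc) al be :
  val x = lin_comb al be (val a) (val b) -> side x = al * be.
Proof.
move=> ex; rewrite /side !arc_detE ex !vdet_lin_combl !vdetxx.
rewrite (vdetC (val a) (val b)) -arc_detE -/d.
by transitivity (al * be * (d * d)); [ring|rewrite dd mulr1].
Qed.

Lemma side_pm1 (x : iarc) : disjoint_arcs x a -> disjoint_arcs x b -> pm1 (side x).
Proof. by move=> /disjoint_arcsP xa /disjoint_arcsP xb; exact/pm1N/pm1M. Qed.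

Lemma arc_eq_side (x y : iarc) :
  disjoint_arcs x a -> disjoint_arcs x b -> disjoint_arcs y a -> disjoint_arcs y b ->
  (x == y) = (side x == side y).
Proof.
move=> xa xb ya yb; apply/eqP/eqP => [-> //|].
have [al [be [pal pbe ex]]] := lin_comb_of_disjoint xa xb.
have [ga [de [pga pde ey]]] := lin_comb_of_disjoint ya yb.
rewrite (side_lin_comb ex) (side_lin_comb ey) => s_eq.
have [[ga_al de_be]|[ga_al de_be]] : (ga = al /\ de = be) \/ (ga = - al /\ de = - be).
  by move: s_eq; case: pal => ->; case: pbe => ->; case: pga => ->; case: pde => ->; lia.
- by apply: val_inj; rewrite ex ey ga_al de_be.
- by case: (@arc_neq_opp x y); rewrite ex ey ga_al de_be /lin_comb /=; congr pair; ring.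
Qed.

Lemma exists_arc_side e : pm1 e ->
  exists x : iarc, [/\ disjoint_arcs x a, disjoint_arcs x b & side x = e].
Proof.
move=> pe; have /disjoint_arcsP ab := dab.
have [x ex] : exists x : iarc, exists2 k, pm1 k & val x = lin_comb k (k * e) (val a) (val b).
  have [|x [ex|ex]] := @arc_of_unimodular (lin_comb 1 e (val a) (val b)) a.
  - by rewrite vdet_lin_combl vdetxx mulr0 add0r vdetC mulrN -arc_detE; exact/pm1N/pm1M.
  - by exists x, 1; [left|rewrite ex mul1r].
  - by exists x, (-1); [right|rewrite ex /lin_comb /=; congr pair; ring].
case: ex => k pk ex; have pke := pm1M pk pe.
have [xa xb] := disjoint_of_lin_comb pk pke ex.
by exists x; rewrite (side_lin_comb ex) mulrA pm1_sqr // mul1r.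
Qed.

Lemma qform_side (x : iarc) : disjoint_arcs x a -> disjoint_arcs x b ->
  qform (val x) = qform (val a) + qform (val b) + side x * qpolar (val a) (val b).
Proof.
move=> xa xb; have [al [be [pal pbe ex]]] := lin_comb_of_disjoint xa xb.
by rewrite ex qform_lin_comb // (side_lin_comb ex).
Qed.

End ArcsAroundEdge.

Definition triangle (a b c : iarc) : bool :=
  [&& disjoint_arcs a b, disjoint_arcs c a & disjoint_arcs c b].

Definition flip_of (a b c w : iarc) : bool :=
  [&& disjoint_arcs w a, disjoint_arcs w b & w != c].

Lemma triangle_swap (a b c : iarc) : triangle a b c -> triangle b a c.
Proof. by case/and3P => ab ca cb; rewrite /triangle disjoint_arcsC ab ca cb. Qed.

Lemma triangle_rot (a b c : iarc) : triangle a b c -> triangle b c a.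
Proof.
by case/and3P => ab ca cb; rewrite /triangle disjoint_arcsC cb ab disjoint_arcsC ca.
Qed.

Lemma triangle_neq (a b c : iarc) : triangle a b c -> [/\ a != b, a != c & b != c].
Proof.
case/and3P => ab ca cb; rewrite disjoint_arcs_neq //.
by split; rewrite // eq_sym disjoint_arcs_neq.
Qed.

Lemma flip_ofC (a b c w : iarc) : flip_of a b c w = flip_of b a c w.
Proof. by rewrite /flip_of; case: (disjoint_arcs w a); case: (disjoint_arcs w b). Qed.

Lemma flip_of_triangle (a b c w : iarc) :
  triangle a b c -> flip_of a b c w -> triangle a b w.
Proof. by case/and3P => ab _ _ /and3P[wa wb _]; apply/and3P. Qed.

Lemma flip_of_sym (a b c w : iarc) : triangle a b c -> flip_of a b c w -> flip_of a b w c.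
Proof. by case/and3P => _ ca cb /and3P[_ _ wc]; rewrite /flip_of ca cb eq_sym. Qed.

Section Flip.
Variables a b c : iarc.
Hypothesis abc : triangle a b c.

Let dab : disjoint_arcs a b. Proof. by case/and3P: abc. Qed.
Let dca : disjoint_arcs c a. Proof. by case/and3P: abc. Qed.
Let dcb : disjoint_arcs c b. Proof. by case/and3P: abc. Qed.

Lemma side_flip (w : iarc) : flip_of a b c w -> side a b w = - side a b c.
Proof.
case/and3P => wa wb; rewrite (arc_eq_side dab) // eq_sym.
exact: pm1_eqN (side_pm1 dca dcb) (side_pm1 wa wb).
Qed.

Lemma flip_arc_exists : exists w : iarc, flip_of a b c w.
Proof.
have [w [wa wb sw]] := exists_arc_side dab (pm1N (side_pm1 dca dcb)).
exists w; rewrite /flip_of wa wb (arc_eq_side dab) // sw eq_sym.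
exact/pm1_neqN/side_pm1.
Qed.

Lemma flip_arc_uniq (w w' : iarc) : flip_of a b c w -> flip_of a b c w' -> w = w'.
Proof.
move=> fw fw'; have /and3P[wa wb _] := fw; have /and3P[w'a w'b _] := fw'.
by apply/eqP; rewrite (arc_eq_side dab) // (side_flip fw) (side_flip fw').
Qed.

Lemma qform_flip (w : iarc) : flip_of a b c w ->
  qform (val w) = qform (val c) - 2 * side a b c * qpolar (val a) (val b).
Proof.
move=> fw; have /and3P[wa wb _] := fw.
by rewrite (qform_side dab wa wb) (qform_side dab dca dcb) (side_flip fw); ring.
Qed.

Lemma qform_flip_neq (w : iarc) : flip_of a b c w -> qform (val w) != qform (val c).
Proof.
move=> fw; have /disjoint_arcsP/qpolar_neq0 B_neq0 := dab.
by rewrite (qform_flip fw); case: (side_pm1 dca dcb) => ->; lia.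
Qed.

Lemma side_qpolar_add :
  side a b c * qpolar (val a) (val b) + side a c b * qpolar (val a) (val c) =
  -2 * qform (val a).
Proof.
have [al [be [pal _ ec]]] := lin_comb_of_disjoint dab dca dcb.
have /disjoint_arcsP/pm1_sqr dd := dab.
rewrite /side !arc_detE ec.
transitivity (-2 * (al * al) * (arc_det a b * arc_det a b) * qform (val a)).
  by rewrite arc_detE /vdet /qform /qpolar /lin_comb /=; ring.
by rewrite dd pm1_sqr // mulr1 mulr1.
Qed.

End Flip.

(* Hence two different flips of one triangulation cannot both lower its height. *)
Lemma qform_flip_add (a b c wc wb : iarc) :
  triangle a b c -> flip_of a b c wc -> flip_of a c b wb ->
  (qform (val wc) - qform (val c)) + (qform (val wb) - qform (val b)) = 4 * qform (val a).
Proof.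
move=> abc fwc fwb; have acb : triangle a c b by apply/triangle_rot/triangle_swap.
rewrite (qform_flip abc fwc) (qform_flip acb fwb).
have := side_qpolar_add abc; set sc := side a b c; set sb := side a c b => e.
transitivity (-2 * (sc * qpolar (val a) (val b) + sb * qpolar (val a) (val c))); first ring.
by rewrite e; ring.
Qed.

Section Fset3.
Variable K : choiceType.
Implicit Types (a b c x z : K) (s : {fset K}).

Lemma in_fset3 x a b c : (x \in [fset a; b; c]) = [|| x == a, x == b | x == c].
Proof. by rewrite !inE orbA. Qed.

Lemma fset3C12 a b c : [fset a; b; c] = [fset b; a; c].
Proof. by apply/fsetP => x; rewrite !in_fset3; case: (x == a); case: (x == b). Qed.

Lemma fset3C23 a b c : [fset a; b; c] = [fset a; c; b].
Proof.
by apply/fsetP => x; rewrite !in_fset3; case: (x == b); case: (x == c); rewrite ?orbT.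
Qed.

Lemma cardfs3 a b c : a != b -> a != c -> b != c -> #|` [fset a; b; c]| = 3%N.
Proof.
move=> ab ac bc; rewrite -fsetUA !cardfsU1 cardfs1 !inE.
by rewrite negb_or ab ac bc.
Qed.

Lemma sum_fset3 (R : nmodType) (F : K -> R) a b c : a != b -> a != c -> b != c ->
  \sum_(x <- [fset a; b; c]) F x = F a + F b + F c.
Proof.
move=> ab ac bc; rewrite -fsetUA !big_fsetU1 ?big_seq_fset1 /= ?addrA // !inE //.
by rewrite negb_or ab ac.
Qed.

Lemma sum_fset2 (R : nmodType) (F : K -> R) a b : a != b ->
  \sum_(x <- [fset a; b]) F x = F a + F b.
Proof. by move=> ab; rewrite big_fsetU1 ?big_seq_fset1 // inE. Qed.

Lemma prod_fset2 (R : comPzSemiRingType) (F : K -> R) a b : a != b ->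
  \prod_(x <- [fset a; b]) F x = F a * F b.
Proof. by move=> ab; rewrite big_fsetU1 ?big_seq_fset1 // inE. Qed.

Lemma fset3I a b c w : w != a -> w != b -> w != c -> c != a -> c != b ->
  [fset a; b; w] `&` [fset a; b; c] = [fset a; b].
Proof.
move=> wa wb wc ca cb; apply/fsetP => x; rewrite !inE.
case: (x =P a) => //= _; case: (x =P b) => //= _.
by case: (x =P c) => [->|_]; rewrite ?andbF // eq_sym (negPf wc).
Qed.

Lemma fset3D a b c w : w != c -> c != a -> c != b ->
  [fset a; b; c] `\` [fset a; b; w] = [fset c].
Proof.
move=> wc ca cb; apply/fsetP => x; rewrite !inE.
case: (x =P c) => [->|_]; first by rewrite (negPf ca) (negPf cb) eq_sym (negPf wc).
by rewrite orbF; case: (x == a); case: (x == b); rewrite ?andbF.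
Qed.

Lemma cardfs3_mem2 s a b : #|` s| = 3%N -> a \in s -> b \in s -> a != b ->
  exists w, [/\ s = [fset a; b; w], w != a & w != b].
Proof.
move=> s3 a_in b_in ab.
have bsa : b \in s `\ a by rewrite in_fsetD1 b_in andbT eq_sym.
have /cardfs1P[w sabw] : #|` s `\ a `\ b| == 1%N.
  by move: s3; rewrite (cardfsD1 a) a_in (cardfsD1 b) bsa; lia.
have : w \in s `\ a `\ b by rewrite sabw inE.
rewrite !inE => /and3P[wb wa _]; exists w; split=> //.
by rewrite -fsetUA -sabw fsetD1K // fsetD1K.
Qed.

Lemma fset31 a b c : a \in [fset a; b; c]. Proof. by rewrite in_fset3 eqxx. Qed.
Lemma fset32 a b c : b \in [fset a; b; c]. Proof. by rewrite in_fset3 eqxx orbT. Qed.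
Lemma fset33 a b c : c \in [fset a; b; c]. Proof. by rewrite in_fset3 eqxx !orbT. Qed.

Lemma fset3_notin x a b c : x != a -> x != b -> x != c -> x \notin [fset a; b; c].
Proof. by move=> xa xb xc; rewrite in_fset3 (negPf xa) (negPf xb) (negPf xc). Qed.

Lemma fset3_exchange s a b c : #|` s| = 3%N -> #|` s `&` [fset a; b; c]| = 2%N ->
  c \notin s -> a != b -> exists w, [/\ s = [fset a; b; w], w != a & w != b].
Proof.
move=> s3 st2 c_out ab.
have st : s `&` [fset a; b; c] = [fset a; b].
  apply/eqP; rewrite eqEfcard cardfs2 ab st2 leqnn andbT.
  apply/fsubsetP => x; rewrite !inE => /andP[x_in].
  case/orP => [->//|/eqP xc].
  by move: c_out; rewrite -xc x_in.
have [a_in b_in] : a \in s /\ b \in s.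
  by have := fset21 a b; have := fset22 a b; rewrite -st !in_fsetI => /andP[-> _] /andP[-> _].
exact: cardfs3_mem2.
Qed.

Lemma fset_diff_mem s t : (#|` s `&` t| < #|` t|)%N -> exists2 z, z \in t & z \notin s.
Proof.
move=> st_lt; have [ts0|[z]] := fset_0Vmem (t `\` s).
  by move: st_lt; rewrite fsetIC -(cardfsID s t) ts0 cardfs0 addn0 ltnn.
by rewrite in_fsetD => /andP[z_out z_in]; exists z.
Qed.

Lemma cardfs3_mem s z : #|` s| = 3%N -> z \in s ->
  exists a b, [/\ s = [fset a; b; z], a != b, a != z & b != z].
Proof.
move=> s3 z_in; have [sz0|[a]] := fset_0Vmem (s `\ z).
  by move: s3; rewrite (cardfsD1 z) z_in sz0 cardfs0.
rewrite in_fsetD1 => /andP[az a_in].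
have [b [-> bz ba]] := cardfs3_mem2 s3 a_in z_in az.
by exists a, b; rewrite fset3C23 eq_sym ba.
Qed.

Lemma fset_argmax (f : K -> int) (T : {fset K}) x0 : x0 \in T ->
  exists2 x, x \in T & {in T, forall y, f y <= f x}.
Proof.
move=> x0T; have [[x xT] _ xmax] := arg_maxP (fun y : T => f (val y)) (isT : predT [` x0T]).
by exists x => // y yT; apply: (xmax [` yT]).
Qed.

Lemma fset_argmin (f : K -> int) (T : {fset K}) x0 : x0 \in T ->
  exists2 x, x \in T & {in T, forall y, f x <= f y}.
Proof.
move=> x0T; have [x xT xmax] := fset_argmax (fun y => - f y) x0T.
by exists x => // y /xmax; rewrite lerN2.
Qed.

End Fset3.

Lemma is_tri_disjoint (t : tri) x y :
  is_tri t -> x \in t -> y \in t -> x != y -> disjoint_arcs x y.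
Proof.
case/andP => _ /forallP tri_disj x_in y_in.
by move: (tri_disj [` x_in]) => /forallP /(_ [` y_in]) /implyP.
Qed.

Lemma is_tri_fset3 (a b c : iarc) : triangle a b c -> is_tri [fset a; b; c].
Proof.
move=> abc; have [ab ac bc] := triangle_neq abc.
rewrite /is_tri cardfs3 //=; apply/forallP => x; apply/forallP => y; apply/implyP.
have := abc; have := triangle_rot abc; have := triangle_rot (triangle_rot abc).
case/and3P=> ? ? ? /and3P[? ? ?] /and3P[? ? ?].
have := valP x; have := valP y; rewrite !in_fset3.
by case/or3P=> /eqP->; case/or3P=> /eqP->; rewrite ?eqxx // disjoint_arcsC.
Qed.

Lemma is_tri_at (t : tri) z : is_tri t -> z \in t ->
  exists a b, t = [fset a; b; z] /\ triangle a b z.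
Proof.
move=> tt z_in; have /andP[/eqP t3 _] := tt.
have [a [b [et ab az bz]]] := cardfs3_mem t3 z_in.
have mem : [/\ a \in t, b \in t & z \in t] by rewrite et !in_fset3 !eqxx ?orbT.
case: mem => a_in b_in _; exists a, b; split => //.
by rewrite /triangle !(is_tri_disjoint tt) // eq_sym.
Qed.

Lemma flip_adjC (s t : tri) : flip_adj s t = flip_adj t s.
Proof. by rewrite /flip_adj fsetIC andbCA. Qed.

Lemma flip_adj_neq (s t : tri) : flip_adj s t -> s != t.
Proof.
case/and3P => /andP[/eqP s3 _] _ st2; apply/eqP => est.
by move: st2; rewrite -est fsetIid s3.
Qed.

Lemma flip_adj_fset3 (t : tri) (a b c w : iarc) : t = [fset a; b; c] ->
  triangle a b c -> flip_of a b c w -> flip_adj [fset a; b; w] t.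
Proof.
move=> -> abc fw; have [ab ac bc] := triangle_neq abc.
have abw := flip_of_triangle abc fw.
have [wa wb _] := triangle_neq (triangle_rot (triangle_rot abw)).
have [_ _ wc] := and3P fw.
apply/and3P; split; [exact: is_tri_fset3 abw|exact: is_tri_fset3 abc|].
by rewrite fset3I ?cardfs2 ?ab // eq_sym.
Qed.

Lemma flip_adj_notin (s t : tri) (a b c : iarc) : t = [fset a; b; c] -> triangle a b c ->
  flip_adj s t -> c \notin s -> exists w, s = [fset a; b; w] /\ flip_of a b c w.
Proof.
move=> -> abc /and3P[ts _ /eqP st2] c_out; have [ab _ _] := triangle_neq abc.
have /andP[/eqP s3 _] := ts.
have [w [es wa wb]] := fset3_exchange s3 st2 c_out ab.
have w_in : w \in s by rewrite es; apply: fset33.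
have [a_in b_in] : a \in s /\ b \in s by rewrite es; split; [apply: fset31|apply: fset32].
exists w; split=> //; apply/and3P; split.
- exact: is_tri_disjoint ts w_in a_in wa.
- exact: is_tri_disjoint ts w_in b_in wb.
- by apply: contraNneq c_out => <-.
Qed.

Lemma flip_adj_shape (s t : tri) : flip_adj s t -> exists a b c w : iarc,
  [/\ t = [fset a; b; c], s = [fset a; b; w], triangle a b c & flip_of a b c w].
Proof.
move=> st; have /and3P[_ tt /eqP st2] := st; have /andP[/eqP t3 _] := tt.
have [z z_in z_out] : exists2 z, z \in t & z \notin s.
  by apply: fset_diff_mem; rewrite st2 t3.
have [a [b [et abz]]] := is_tri_at tt z_in.
have [w [es fw]] := flip_adj_notin et abz st z_out.
by exists a, b, z, w.
Qed.

Lemma flip_adj_fset3P (a b c wc wb wa : iarc) (s : tri) : triangle a b c ->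
  flip_of a b c wc -> flip_of a c b wb -> flip_of b c a wa ->
  flip_adj s [fset a; b; c] <->
  [\/ s = [fset a; b; wc], s = [fset a; c; wb] | s = [fset b; c; wa]].
Proof.
move=> abc fwc fwb fwa; have acb : triangle a c b by apply/triangle_rot/triangle_swap.
have bca := triangle_rot abc.
have Eacb : [fset a; b; c] = [fset a; c; b] := fset3C23 a b c.
have Ebca : [fset a; b; c] = [fset b; c; a] := etrans (fset3C12 a b c) (fset3C23 b a c).
split=> [st|[->|->|->]]; last 3 first.
- exact: flip_adj_fset3 (erefl _) abc fwc.
- exact: flip_adj_fset3 Eacb acb fwb.
- exact: flip_adj_fset3 Ebca bca fwa.
have /and3P[_ tt /eqP st2] := st; have /andP[/eqP t3 _] := tt.
have [z z_in z_out] : exists2 z, z \in [fset a; b; c] & z \notin s.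
  by apply: fset_diff_mem; rewrite st2 t3.
move: z_in; rewrite in_fset3 => /or3P[] /eqP ez; rewrite ez in z_out.
- have [w [-> fw]] := flip_adj_notin Ebca bca st z_out.
  by rewrite (flip_arc_uniq bca fw fwa); exact: Or33 (erefl _).
- have [w [-> fw]] := flip_adj_notin Eacb acb st z_out.
  by rewrite (flip_arc_uniq acb fw fwb); exact: Or32 (erefl _).
- have [w [-> fw]] := flip_adj_notin (erefl _) abc st z_out.
  by rewrite (flip_arc_uniq abc fw fwc); exact: Or31 (erefl _).
Qed.

Lemma is_tri_shape (t : tri) : is_tri t ->
  exists a b c : iarc, t = [fset a; b; c] /\ triangle a b c.
Proof.
move=> tt; have /andP[/eqP t3 _] := tt.
have [t0|[z z_in]] := fset_0Vmem t; first by move: t3; rewrite t0 cardfs0.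
by have [a [b [et abz]]] := is_tri_at tt z_in; exists a, b, z.
Qed.

Lemma flip_adj_exists (t : tri) : is_tri t -> exists p : tri, flip_adj p t.
Proof.
case/is_tri_shape => [a [b [c [et abc]]]]; have [w fw] := flip_arc_exists abc.
by exists [fset a; b; w]; apply: flip_adj_fset3 et abc fw.
Qed.

Definition hgt (t : tri) : int := \sum_(x <- t) qform (val x).

Lemma hgt_fset3 (t : tri) (a b c : iarc) : t = [fset a; b; c] -> triangle a b c ->
  hgt t = qform (val a) + qform (val b) + qform (val c).
Proof. by move=> -> /triangle_neq[ab ac bc]; rewrite /hgt sum_fset3. Qed.

Lemma hgt_flip (s t : tri) (a b c w : iarc) : t = [fset a; b; c] -> s = [fset a; b; w] ->
  triangle a b c -> flip_of a b c w -> hgt s - hgt t = qform (val w) - qform (val c).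
Proof.
move=> et es abc fw.
by rewrite (hgt_fset3 et abc) (hgt_fset3 es (flip_of_triangle abc fw)); ring.
Qed.

Lemma hgt_flip_adj_neq (s t : tri) : flip_adj s t -> hgt s != hgt t.
Proof.
case/flip_adj_shape => [a [b [c [w [et es abc fw]]]]].
by rewrite -subr_eq0 (hgt_flip et es abc fw) subr_eq0; exact: (qform_flip_neq abc fw).
Qed.

Lemma hgt_flip_adj_add (s1 s2 t : tri) : flip_adj s1 t -> flip_adj s2 t -> s1 != s2 ->
  0 < (hgt s1 - hgt t) + (hgt s2 - hgt t).
Proof.
move=> st1 st2 s12; have [a [b [c [w [et _ abc _]]]]] := flip_adj_shape st1.
have acb : triangle a c b by apply/triangle_rot/triangle_swap.
have bca := triangle_rot abc.
have [wc fwc] := flip_arc_exists abc.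
have [wb fwb] := flip_arc_exists acb.
have [wa fwa] := flip_arc_exists bca.
have Eacb : t = [fset a; c; b] := etrans et (fset3C23 a b c).
have Ebca : t = [fset b; c; a] := etrans et (etrans (fset3C12 a b c) (fset3C23 b a c)).
have nbr s : flip_adj s t ->
    [\/ hgt s - hgt t = qform (val wc) - qform (val c) /\ s = [fset a; b; wc],
         hgt s - hgt t = qform (val wb) - qform (val b) /\ s = [fset a; c; wb] |
         hgt s - hgt t = qform (val wa) - qform (val a) /\ s = [fset b; c; wa]].
  move=> st; have : flip_adj s [fset a; b; c] by rewrite -et.
  move=> /(flip_adj_fset3P _ abc fwc fwb fwa)[] es.
  - by constructor 1; split; first exact: hgt_flip et es abc fwc.
  - by constructor 2; split; first exact: hgt_flip Eacb es acb fwb.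
  - by constructor 3; split; first exact: hgt_flip Ebca es bca fwa.
have dab := qform_flip_add abc fwc fwb.
have dba := qform_flip_add (triangle_swap abc) (etrans (flip_ofC _ _ _ _) fwc) fwa.
have dca := qform_flip_add (triangle_rot bca) (etrans (flip_ofC _ _ _ _) fwb)
  (etrans (flip_ofC _ _ _ _) fwa).
have qa := qform_gt0 a; have qb := qform_gt0 b; have qc := qform_gt0 c.
have [p_cb p_ca p_ba] :
    [/\ 0 < (qform (val wc) - qform (val c)) + (qform (val wb) - qform (val b)),
         0 < (qform (val wc) - qform (val c)) + (qform (val wa) - qform (val a)) &
         0 < (qform (val wb) - qform (val b)) + (qform (val wa) - qform (val a))].
  by split; [rewrite dab|rewrite dba|rewrite dca]; rewrite pmulr_rgt0.
case: (nbr _ st1) => [][-> e1]; case: (nbr _ st2) => [][-> e2];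
  first [done | by rewrite addrC | by move: s12; rewrite e1 e2 eqxx].
Qed.

Definition lower_nbr (s t : tri) : bool := flip_adj s t && (hgt s < hgt t).

Lemma lower_nbr_uniq (s1 s2 t : tri) : lower_nbr s1 t -> lower_nbr s2 t -> s1 = s2.
Proof.
move=> /andP[st1 lt1] /andP[st2 lt2]; apply/eqP; apply: contraLR isT => s12.
by have := hgt_flip_adj_add st1 st2 s12; lia.
Qed.

Lemma flip_adj_lower (s t : tri) : flip_adj s t -> ~~ lower_nbr t s -> lower_nbr s t.
Proof.
move=> st; rewrite /lower_nbr flip_adjC st /= -leNgt le_eqVlt.
by rewrite (negPf (hgt_flip_adj_neq st)).
Qed.

Lemma lower_nbr_climb (prev cur : tri) (p : seq tri) :
  lower_nbr prev cur -> path flip_adj cur p -> uniq [:: prev, cur & p] ->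
  exists2 z, z \in [:: prev, cur & p] & lower_nbr z (last cur p).
Proof.
elim: p prev cur => [|nx p IH] prev cur low_pc /=; first by exists prev; rewrite ?inE ?eqxx.
case/andP => c_nx p_path /andP[p_out un].
have pnx : prev != nx by apply: contraNneq p_out => ->; rewrite !inE eqxx orbT.
have low_cnx : lower_nbr cur nx.
  apply: flip_adj_lower c_nx _; apply/negP => low_nxc; move/negP: pnx; apply.
  by rewrite (lower_nbr_uniq low_nxc low_pc).
have [z z_in low_z] := IH cur nx low_cnx p_path un.
by exists z => //; rewrite inE z_in orbT.
Qed.

Definition is_bottom (T : {fset tri}) (x : tri) : Prop :=
  forall z, z \in T -> ~~ lower_nbr z x.

Definition unique_bottom (T : {fset tri}) : Prop :=
  {in T &, forall x y, is_bottom T x -> is_bottom T y -> x = y}.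

Lemma is_bottom_argmin (T : {fset tri}) x :
  {in T, forall y, hgt x <= hgt y} -> is_bottom T x.
Proof. by move=> xmin z /xmin; apply: contraL => /andP[_]; rewrite -ltNge. Qed.

Lemma argmax_lower_nbr (T : {fset tri}) M x : unique_bottom T -> M \in T -> x \in T ->
  x != M -> {in T, forall y, hgt y <= hgt M} -> exists2 p, p \in T & lower_nbr p M.
Proof.
move=> ub MT xT xM Mmax.
have [/existsP[[p pT] lpM]|/existsPn noM] := boolP [exists p : T, lower_nbr (val p) M].
  by exists p.
have botM : is_bottom T M by move=> z zT; apply: (noM [` zT]).
have [m mT mmin] := fset_argmin hgt MT.
have mM : m = M := ub _ _ mT MT (is_bottom_argmin mmin) botM.
have botx : is_bottom T x.
  apply: is_bottom_argmin => y yT; rewrite (le_trans (Mmax _ xT)) // -mM; exact: mmin.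
by move: xM; rewrite (ub _ _ xT MT botx botM) eqxx.
Qed.

Lemma unique_bottom_fsetD1 (T : {fset tri}) M :
  {in T, forall y, hgt y <= hgt M} -> unique_bottom T -> unique_bottom (T `\ M).
Proof.
move=> Mmax ub x y; rewrite !in_fsetD1 => /andP[_ xT] /andP[_ yT] botx boty.
have lift u : u \in T -> is_bottom (T `\ M) u -> is_bottom T u.
  move=> uT botu z zT; have [->|zM] := eqVneq z M.
    by rewrite /lower_nbr ltNge Mmax // andbF.
  by apply: botu; rewrite in_fsetD1 zM.
exact: ub _ _ xT yT (lift x xT botx) (lift y yT boty).
Qed.

(* Along a path without backtracking that starts upwards, heights keep increasing
   (each triangulation has at most one lower neighbour), so a path joining two
   bottoms of [T] inside [T] must be trivial. *)
Lemma finite_subtree_unique_bottom (T : {fset tri}) : finite_subtree T -> unique_bottom T.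
Proof.
case/andP => _ /forallP conn x y xT yT botx boty.
have /forallP /(_ [` yT]) /connectP[q q_path] := conn [` xT].
case: (shortenP q_path) => {q q_path} [[|nx q] q_path q_uniq _] /= q_last.
  by move/(congr1 val): q_last.
case/andP: q_path => x_nx q_path.
have low_x_nx : lower_nbr x (val nx) by apply: flip_adj_lower x_nx (botx _ (valP nx)).
have val_path : path flip_adj (val nx) (map val q) by rewrite path_map.
have val_uniq : uniq [:: x, val nx & map val q].
  by rewrite -(map_inj_uniq val_inj [:: [` xT], nx & q]) in q_uniq.
have [z z_in low_z] := lower_nbr_climb low_x_nx val_path val_uniq.
have zT : z \in T.
  move: z_in; rewrite -[x]/(val [` xT]) -map_cons -map_cons.
  by case/mapP => u _ ->; apply: fsvalP.
by move: low_z; rewrite last_map -q_last (negPf (boty _ zT)).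
Qed.

Definition is_boundary (T : {fset tri}) (C : {fset tri * tri}) : Prop :=
  forall e, (e \in C) = in_boundary T e.

Lemma is_boundary_fset1 (t p sb sa : tri) :
  (forall s, flip_adj s t <-> [\/ s = p, s = sb | s = sa]) ->
  is_boundary [fset t] [fset (p, t); (sb, t); (sa, t)].
Proof.
move=> nbr [x y]; rewrite in_fset3 /in_boundary !in_fset1 /= !xpair_eqE.
have adj s : [\/ s = p, s = sb | s = sa] -> [&& flip_adj s t, t == t & s != t].
  by move=> /nbr st; rewrite st eqxx flip_adj_neq.
apply/idP/idP => [|/and3P[xy /eqP yt _]].
- case/or3P => /andP[/eqP-> /eqP->]; apply: adj.
  + exact: Or31 (erefl _).
  + exact: Or32 (erefl _).
  + exact: Or33 (erefl _).
- by subst y; case: ((nbr x).1 xy) => ->; rewrite !eqxx ?orbT.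
Qed.

Lemma is_boundary_fsetU1 (T : {fset tri}) (C : {fset tri * tri}) (M p sb sa : tri) :
  (forall s, flip_adj s M <-> [\/ s = p, s = sb | s = sa]) ->
  M \notin T -> p \in T -> sb \notin T -> sa \notin T -> is_boundary T C ->
  is_boundary (M |` T) ((sb, M) |` ((sa, M) |` (C `\ (M, p)))).
Proof.
move=> nbr MT pT sbT saT bC [x y].
rewrite !in_fsetU !in_fset1 in_fsetD1 bC /in_boundary /= !in_fsetU !in_fset1 !xpair_eqE.
case: (y =P M) => [->|/eqP yM]; rewrite ?eqxx ?andbT ?andbF ?(negPf MT) /=.
  rewrite !andbF orbF; apply/idP/idP => [/orP[]/eqP->|/andP[/(nbr x).1 + /norP[_ xT]]].
  - have sbM := (nbr sb).2 (Or32 _ _ (erefl _)).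
    by rewrite sbM (negPf (flip_adj_neq sbM)) (negPf sbT).
  - have saM := (nbr sa).2 (Or33 _ _ (erefl _)).
    by rewrite saM (negPf (flip_adj_neq saM)) (negPf saT).
  - by case=> ex; subst x; rewrite ?eqxx ?orbT //; case/negP: xT.
case: (x =P M) => [->|_] //=; rewrite !andbF.
apply/negP => /and4P[yp My yT _].
have : flip_adj y M by rewrite flip_adjC.
case/nbr => ey.
- by rewrite ey eqxx in yp.
- by case/negP: sbT; rewrite -ey.
- by case/negP: saT; rewrite -ey.
Qed.

Definition psi_formula (E : comUnitRingType) (h la lb lc Wa Wb : E) : E :=
  h^-1 * (lc / (la * lb) + (Wa / (2 * la) + Wb / (2 * lb))).

Section PsiIdentities.
Variable E : comUnitRingType.
Variables (la lb lc Wa Wb Wc h : E).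
Hypotheses (ua : la \is a GRing.unit) (ub : lb \is a GRing.unit) (uc : lc \is a GRing.unit).
Hypotheses (u2 : (2 : E) \is a GRing.unit) (uh : h \is a GRing.unit).
Hypothesis h_eq :
  h = la / (lb * lc) + lb / (la * lc) + lc / (la * lb) + Wa / la + Wb / lb + Wc / lc.

Lemma psi_vertex_identity :
  psi_formula h la lb lc Wa Wb + psi_formula h la lc lb Wa Wc +
  psi_formula h lb lc la Wb Wc = 1.
Proof.
rewrite /psi_formula -!mulrDr -[RHS](mulVr uh); congr (_ * _).
rewrite h_eq !invrM //.
transitivity (la * (lc^-1 * lb^-1) + lb * (lc^-1 * la^-1) + lc * (lb^-1 * la^-1)
   + (Wa * la^-1 + Wb * lb^-1 + Wc * lc^-1) * (2 * 2^-1)); first by ring.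
by rewrite mulrV // mulr1; ring.
Qed.

Lemma psi_edge_identity lw : lc * lw = la ^+ 2 + lb ^+ 2 + la * lb * Wc ->
  psi_formula h la lb lc Wa Wb + psi_formula h la lb lw Wa Wb = 1.
Proof.
move=> ptolemy; rewrite /psi_formula -!mulrDr -[RHS](mulVr uh); congr (_ * _).
rewrite h_eq !invrM //.
have lw_eq : lw * (lb^-1 * la^-1) =
    la * (lc^-1 * lb^-1) + lb * (lc^-1 * la^-1) + Wc * lc^-1.
  transitivity ((lc * lw) * (lb^-1 * la^-1) * lc^-1).
    by rewrite -[LHS]mulr1 -(mulrV uc); ring.
  rewrite ptolemy.
  transitivity (la * (lc^-1 * lb^-1) * (la * la^-1) + lb * (lc^-1 * la^-1) * (lb * lb^-1)
     + Wc * lc^-1 * (la * la^-1) * (lb * lb^-1)); first by ring.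
  by rewrite !mulrV // !mulr1.
transitivity (lc * (lb^-1 * la^-1) + lw * (lb^-1 * la^-1)
   + (Wa * la^-1 + Wb * lb^-1) * (2 * 2^-1)); first by ring.
by rewrite mulrV // mulr1 lw_eq; ring.
Qed.

End PsiIdentities.

Section Psi.
Variables (K : realFieldType) (E : comUnitRingType) (body : {rmorphism E -> K}).
Hypothesis unitE : forall x : E, (x \is a GRing.unit) = (body x != 0).
Variables (lam W : iarc -> E).
Hypothesis lam_pos : forall e, 0 < body (lam e).
Hypothesis W_body : forall e, body (W e) = 0.
Hypothesis flip_rel : forall a b c d : iarc,
  flip_adj [fset a; b; c] [fset a; b; d] -> c != d ->
  lam c * lam d = lam a ^+ 2 + lam b ^+ 2 + lam a * lam b * W c.
Variable h : E.
Hypothesis h_def : forall a b c : iarc, is_tri [fset a; b; c] ->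
  h = semi_perimeter lam W a b c.

Local Notation psi := (psi lam W h).

Lemma lam_unit x : lam x \is a GRing.unit.
Proof. by rewrite unitE lt0r_neq0. Qed.

Lemma two_unit : (2 : E) \is a GRing.unit.
Proof. by rewrite unitE rmorph_nat pnatr_eq0. Qed.

Lemma h_unit (a b c : iarc) : is_tri [fset a; b; c] -> h \is a GRing.unit.
Proof.
move=> tt; rewrite unitE (h_def tt) /semi_perimeter.
have body_inv x : body (lam x)^-1 = (body (lam x))^-1 by rewrite rmorphV ?lam_unit.
rewrite !rmorphD !rmorphM !invrM ?lam_unit // !rmorphM !body_inv !W_body !mul0r !addr0.
have := lam_pos a; have := lam_pos b; have := lam_pos c => pc pb pa.
by rewrite lt0r_neq0 // !addr_gt0 // !mulr_gt0 // invr_gt0.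
Qed.

Lemma psi_flip (s t : tri) (a b c w : iarc) : t = [fset a; b; c] -> s = [fset a; b; w] ->
  triangle a b c -> flip_of a b c w ->
  psi (s, t) = psi_formula h (lam a) (lam b) (lam c) (W a) (W b).
Proof.
move=> -> -> abc /and3P[wa wb wc]; have [ab ac bc] := triangle_neq abc.
have [ca cb] : c != a /\ c != b by split; rewrite eq_sym.
have [wa' wb'] := (disjoint_arcs_neq wa, disjoint_arcs_neq wb).
rewrite /psi /= (fset3D wc ca cb) (fset3I wa' wb' wc ca cb).
by rewrite big_seq_fset1 prod_fset2 // sum_fset2.
Qed.

Lemma psi_vertex (s1 s2 s3 t : tri) (a b c wc wb wa : iarc) :
  t = [fset a; b; c] -> triangle a b c ->
  s1 = [fset a; b; wc] -> flip_of a b c wc ->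
  s2 = [fset a; c; wb] -> flip_of a c b wb ->
  s3 = [fset b; c; wa] -> flip_of b c a wa ->
  psi (s1, t) + psi (s2, t) + psi (s3, t) = 1.
Proof.
move=> et abc es1 fwc es2 fwb es3 fwa.
have acb : triangle a c b by apply/triangle_rot/triangle_swap.
have bca := triangle_rot abc.
have Eacb : t = [fset a; c; b] := etrans et (fset3C23 a b c).
have Ebca : t = [fset b; c; a] := etrans et (etrans (fset3C12 a b c) (fset3C23 b a c)).
rewrite (psi_flip et es1 abc fwc) (psi_flip Eacb es2 acb fwb) (psi_flip Ebca es3 bca fwa).
have tt := is_tri_fset3 abc.
by apply: psi_vertex_identity; rewrite ?lam_unit ?two_unit ?(h_unit tt) ?(h_def tt).
Qed.

Lemma psi_edge (s t : tri) : flip_adj s t -> psi (s, t) + psi (t, s) = 1.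
Proof.
move=> st; have [a [b [c [w [et es abc fw]]]]] := flip_adj_shape st.
have tt := is_tri_fset3 abc; have /and3P[_ _ wc] := fw.
have ts : flip_adj [fset a; b; c] [fset a; b; w] by rewrite -et -es flip_adjC.
rewrite (psi_flip et es abc fw).
rewrite (psi_flip es et (flip_of_triangle abc fw) (flip_of_sym abc fw)).
apply: (psi_edge_identity (Wc := W c));
  rewrite ?lam_unit ?two_unit ?(h_unit tt) ?(h_def tt) //.
by apply: flip_rel ts _; rewrite eq_sym.
Qed.

Lemma flip_adj_nbrs (t p : tri) : flip_adj p t -> exists sb sa : tri,
  [/\ forall s, flip_adj s t <-> [\/ s = p, s = sb | s = sa],
      [/\ p != sb, p != sa & sb != sa] &
      psi (p, t) + psi (sb, t) + psi (sa, t) = 1].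
Proof.
move=> pt; have [a [b [c [w [et ep abc fw]]]]] := flip_adj_shape pt.
have acb : triangle a c b by apply/triangle_rot/triangle_swap.
have bca := triangle_rot abc.
have [wb fwb] := flip_arc_exists acb; have [wa fwa] := flip_arc_exists bca.
have [ab ac bc] := triangle_neq abc.
have /and3P[_ _ wbb] := fwb; have /and3P[_ _ waa] := fwa.
exists [fset a; c; wb], [fset b; c; wa]; split.
- by move=> s; rewrite et ep; apply: flip_adj_fset3P.
- have b_out : b \notin [fset a; c; wb] by apply: fset3_notin; rewrite // eq_sym.
  have a_out : a \notin [fset b; c; wa] by apply: fset3_notin; rewrite // eq_sym.
  rewrite ep; split.
  + by apply: contraNneq b_out => <-; apply: fset32.
  + by apply: contraNneq a_out => <-; apply: fset31.
  + by apply: contraNneq a_out => <-; apply: fset31.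
- exact: psi_vertex et abc ep fw (erefl _) fwb (erefl _) fwa.
Qed.

Lemma boundary_sum_fset1 (t : tri) : is_tri t ->
  exists C, is_boundary [fset t] C /\ \sum_(e <- C) psi e = 1.
Proof.
move=> tt; have [p pt] := flip_adj_exists tt.
have [sb [sa [nbr [p_sb p_sa sb_sa] vertex]]] := flip_adj_nbrs pt.
exists [fset (p, t); (sb, t); (sa, t)]; split; first exact: is_boundary_fset1.
by rewrite sum_fset3 // xpair_eqE negb_and ?p_sb ?p_sa ?sb_sa.
Qed.

Lemma boundary_sum_top (T : {fset tri}) (C : {fset tri * tri}) (M p : tri) :
  M \in T -> {in T, forall y, hgt y <= hgt M} -> p \in T -> lower_nbr p M ->
  is_boundary (T `\ M) C -> \sum_(e <- C) psi e = 1 ->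
  exists C', is_boundary T C' /\ \sum_(e <- C') psi e = 1.
Proof.
move=> MT Mmax pT /[dup] low_p /andP[pM _] bC sumC.
have [sb [sa [nbr [p_sb p_sa sb_sa] vertex]]] := flip_adj_nbrs pM.
have out s : flip_adj s M -> s != p -> s \notin T.
  move=> sM sp; apply: contra sp => sT; apply/eqP/(lower_nbr_uniq _ low_p).
  by rewrite /lower_nbr sM lt_neqAle hgt_flip_adj_neq // Mmax.
have sbT : sb \notin T by apply: out; [apply/nbr; exact: Or32 (erefl _)|rewrite eq_sym].
have saT : sa \notin T by apply: out; [apply/nbr; exact: Or33 (erefl _)|rewrite eq_sym].
have M_out : M \notin T `\ M by rewrite in_fsetD1 eqxx.
have pTM : p \in T `\ M by rewrite in_fsetD1 pT (flip_adj_neq pM).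
have sbTM : sb \notin T `\ M by rewrite in_fsetD1 (negPf sbT) andbF.
have saTM : sa \notin T `\ M by rewrite in_fsetD1 (negPf saT) andbF.
have bC' := is_boundary_fsetU1 nbr M_out pTM sbTM saTM bC.
rewrite fsetD1K // in bC'.
eexists; split; first exact: bC'.
have Mp_in : (M, p) \in C by rewrite bC /in_boundary flip_adjC pM pTM.
have notC s : (s, M) \notin C by rewrite bC /in_boundary /= (negPf M_out) andbF.
have notCD s : (s, M) \notin C `\ (M, p) by rewrite in_fsetD1 negb_and notC orbT.
have sb_out : (sb, M) \notin (sa, M) |` (C `\ (M, p)).
  by rewrite in_fsetU in_fset1 xpair_eqE (negPf sb_sa) /= notCD.
rewrite big_fsetU1 // big_fsetU1 //=.
move: sumC; rewrite (big_fsetD1 _ Mp_in) /= => sumC.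
move: (\sum_(e <- C `\ (M, p)) psi e) sumC => X sumC.
transitivity ((psi (p, M) + psi (sb, M) + psi (sa, M)) + (psi (M, p) + X)
  - (psi (p, M) + psi (M, p))); first ring.
by rewrite vertex sumC psi_edge // addrK.
Qed.

Lemma boundary_sum_unique_bottom n (T : {fset tri}) : #|` T| = n.+1 ->
  {in T, forall t, is_tri t} -> unique_bottom T ->
  exists C, is_boundary T C /\ \sum_(e <- C) psi e = 1.
Proof.
elim: n T => [|n IH] T cT triT ub.
  have /cardfs1P[t eT] : #|` T| == 1%N by rewrite cT.
  have tt : is_tri t by apply: triT; rewrite eT fset11.
  by have [C [bC sumC]] := boundary_sum_fset1 tt; exists C; rewrite eT.
have [T0|[x0 x0T]] := fset_0Vmem T; first by move: cT; rewrite T0 cardfs0.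
have [M MT Mmax] := fset_argmax hgt x0T.
have cTM : #|` T `\ M| = n.+1 by move: cT; rewrite (cardfsD1 M) MT => -[].
have [TM0|[x]] := fset_0Vmem (T `\ M); first by move: cTM; rewrite TM0 cardfs0.
rewrite in_fsetD1 => /andP[xM xT].
have [p pT low_p] := argmax_lower_nbr ub MT xT xM Mmax.
have triTM : {in T `\ M, forall t, is_tri t}.
  by move=> t; rewrite in_fsetD1 => /andP[_ /triT].
have [C [bC sumC]] := IH (T `\ M) cTM triTM (unique_bottom_fsetD1 Mmax ub).
exact: boundary_sum_top MT Mmax pT low_p bC sumC.
Qed.

End Psi.

Theorem proposition5p1
  (K : realFieldType)                    (* the body field (reals) *)
  (E : comUnitRingType)                  (* even part of the Grassmann algebra *)
  (body : {rmorphism E -> K})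
  (hunit : forall x : E, (x \is a GRing.unit) = (body x != 0))
  (lam W : iarc -> E)
  (lam_pos : forall e, 0 < body (lam e))
  (W_body : forall e, body (W e) = 0)
  (flip_rel : forall a b c d : iarc,
     flip_adj [fset a; b; c] [fset a; b; d] -> c != d ->
     lam c * lam d = lam a ^+ 2 + lam b ^+ 2 + lam a * lam b * W c)
  (h : E)
  (h_def : forall a b c : iarc, is_tri [fset a; b; c] ->
     h = semi_perimeter lam W a b c)
  (T : {fset tri}) (HT : finite_subtree T) :
  exists C : {fset tri * tri},
    (forall e, (e \in C) = in_boundary T e) /\
    \sum_(e <- C) psi lam W h e = 1.
Proof.
have ub := finite_subtree_unique_bottom HT.
case/andP: HT => /andP[T0 /forallP triT] _.
have [n cT] : exists n, #|` T| = n.+1.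
  by move: T0; rewrite -cardfs_gt0; case: #|` T| => // n _; exists n.
have triT' : {in T, forall t, is_tri t} by move=> t tT; apply: (triT [` tT]).
have [C [bC sumC]] :=
  boundary_sum_unique_bottom hunit lam_pos W_body flip_rel h_def cT triT' ub.
by exists C.
Qed.
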